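(* Strongly $D$-continuous pseudo-orthomodular posets are precisely the complement-closed and doubly dense subsets of complete orthomodular lattices. That is: (a) every strongly $D$-continuous pseudo-orthomodular poset is isomorphic (as a poset with complementation) to a complement-closed and doubly dense subset of some complete orthomodular lattice, with the induced order and complementation; and (b) if $X$ is a complement-closed and doubly dense subset of a complete orthomodular lattice, then $X$ with the induced order and complementation is a strongly $D$-continuous pseudo-orthomodular poset.
   Context: For a poset and $M$ a subset, $U(M)$, $L(M)$ denote the sets of upper and lower bounds; $U(a,b)=U(\{a,b\})$ etc. For subsets $B,C$, $B\le C$ means $b\le c$ for all $b\in B$, $c\in C$. A poset with complementation is a bounded poset $(P,\le,{}',0,1)$ with antitone involution $'$ ($x\le y\Rightarrow y'\le x'$, $x''=x$) with $L(x,x')=\{0\}$, $U(x,x')=\{1\}$; it is pseudo-orthomodular if $L(U(L(x,y),y'),y)=L(x,y)$ for all $x,y$; it is strongly $D$-continuous if for all $B,C\subseteq P$ with $B\le C$: $\bigwedge_{\mathbf P}\{g\in P\mid g\in C\text{ or } g'\in B\}=0$ if and only if every lower bound of $C$ in $P$ is below every upper bound of $B$ in $P$. A lattice with complementation is orthomodular if $x\vee y=((x\vee y)\wedge y')\vee y$ for all $x,y$. For a poset with complementation $\mathbf Q=(Q,\le,{}',0,1)$, a subset $X\subseteq Q$ is complement-closed and doubly dense in $\mathbf Q$ if: for every $a\in Q$, $a=\bigvee_{\mathbf Q}(L(a)\cap X)=\bigwedge_{\mathbf Q}(U(a)\cap X)$; $x\in X$ implies $x'\in X$; and $0,1\in X$.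 *)

Set Implicit Arguments.

Record pc_struct (T : Type) := PC {
  le : T -> T -> Prop;
  cpl : T -> T;
  bot : T;
  top : T }.

Arguments PC {T}.

Section Defs.
Variable T : Type.
Variable S : pc_struct T.

Local Notation "x <= y" := (le S x y).
Local Notation "x '" := (cpl S x) (at level 2, format "x '").

Definition UB (M : T -> Prop) : T -> Prop := fun a => forall m, M m -> m <= a.
Definition LB (M : T -> Prop) : T -> Prop := fun a => forall m, M m -> a <= m.

Definition pair (x y : T) : T -> Prop := fun z => z = x \/ z = y.
Definition add1 (M : T -> Prop) (y : T) : T -> Prop := fun z => M z \/ z = y.

Definition set_eq (A B : T -> Prop) : Prop := forall z, A z <-> B z.

Definition is_sup (M : T -> Prop) (a : T) : Prop :=
  UB M a /\ forall b, UB M b -> a <= b.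
Definition is_inf (M : T -> Prop) (a : T) : Prop :=
  LB M a /\ forall b, LB M b -> b <= a.

Definition is_poset_compl : Prop :=
  (forall x, x <= x) /\
  (forall x y, x <= y -> y <= x -> x = y) /\
  (forall x y z, x <= y -> y <= z -> x <= z) /\
  (forall x, bot S <= x /\ x <= top S) /\
  (forall x y, x <= y -> y ' <= x ') /\
  (forall x, (x ') ' = x) /\
  (forall x, set_eq (LB (pair x (x '))) (fun z => z = bot S)) /\
  (forall x, set_eq (UB (pair x (x '))) (fun z => z = top S)).

Definition pseudo_orthomodular : Prop :=
  forall x y, set_eq (LB (add1 (UB (add1 (LB (pair x y)) (y '))) y))
                     (LB (pair x y)).

Definition set_le (B C : T -> Prop) : Prop :=
  forall b c, B b -> C c -> b <= c.

Definition strongly_D_continuous : Prop :=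
  forall B C : T -> Prop, set_le B C ->
    (is_inf (fun g => C g \/ B (g ')) (bot S) <->
     (forall l u, LB C l -> UB B u -> l <= u)).

Definition complete : Prop :=
  forall M : T -> Prop, (exists a, is_sup M a) /\ (exists a, is_inf M a).

(* x v y = ((x v y) ^ y') v y, written with sups/infs *)
Definition orthomodular : Prop :=
  forall x y j m k, is_sup (pair x y) j -> is_inf (pair j (y ')) m ->
    is_sup (pair m y) k -> j = k.

Definition complete_orthomodular_lattice : Prop :=
  is_poset_compl /\ complete /\ orthomodular.

Definition doubly_dense (X : T -> Prop) : Prop :=
  forall a, is_sup (fun z => z <= a /\ X z) a /\
            is_inf (fun z => a <= z /\ X z) a.

Definition compl_closed (X : T -> Prop) : Prop := forall x, X x -> X (x ').

End Defs.

Definition sub_struct (T : Type) (S : pc_struct T) (X : T -> Prop)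
  (hc : compl_closed S X) (h0 : X (bot S)) (h1 : X (top S)) : pc_struct {x | X x} :=
  PC (fun a b => le S (proj1_sig a) (proj1_sig b))
     (fun a => exist X (cpl S (proj1_sig a)) (hc _ (proj2_sig a)))
     (exist X (bot S) h0)
     (exist X (top S) h1).
Arguments sub_struct {T} S X hc h0 h1.

(* (a) Represent P by its MacNeille completion: the normal ideals A = L(U(A)),
   ordered by inclusion and complemented by A^⊥ = {x | x <= a' for all a in A}.
   This is a complete lattice with complementation in which the principal ideals
   form a complement-closed, doubly dense copy of P.  In a lattice with
   complementation, orthomodularity is equivalent to: b <= c and c /\ b' = 0
   imply c <= b.  For normal ideals K ⊆ J this is exactly the nontrivial half of
   strong D-continuity applied to B = K and C = U(J).  By double
   density, L_X(C) <= U_X(B) iff c <= b, and {g | g in C or g' in B} has infimum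
   0 in X iff c /\ b' = 0; by the same form of orthomodularity these are
   equivalent.  A complete orthomodular lattice is pseudo-orthomodular, because
   ((x /\ y) \/ y') /\ y = x /\ y, and double density transfers this to X. *)

From Stdlib Require Import FunctionalExtensionality PropExtensionality ProofIrrelevance.

Set Implicit Arguments.
Unset Strict Implicit.

Lemma proj1_sig_inj (A : Type) (P : A -> Prop) (u v : sig P) :
  proj1_sig u = proj1_sig v -> u = v.
Proof. apply eq_sig_hprop; intros; apply proof_irrelevance. Qed.

Section Bounds.
Variables (T : Type) (S : pc_struct T).
Local Notation "x <= y" := (le S x y).

Lemma LB_pair x y z : LB S (pair x y) z <-> z <= x /\ z <= y.
Proof.
  split.
  - intros H; split; apply H; [left | right]; reflexivity.
  - intros [Hx Hy] m [-> | ->]; assumption.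
Qed.

Lemma UB_pair x y z : UB S (pair x y) z <-> x <= z /\ y <= z.
Proof.
  split.
  - intros H; split; apply H; [left | right]; reflexivity.
  - intros [Hx Hy] m [-> | ->]; assumption.
Qed.

Lemma pseudo_orthomodular_intro :
  (forall x y z, LB S (add1 (UB S (add1 (LB S (pair x y)) (cpl S y))) y) z ->
                 LB S (pair x y) z) ->
  pseudo_orthomodular S.
Proof.
  intros H x y z; split; [apply H |].
  intros Hz m [Hm | ->].
  - apply Hm; left; exact Hz.
  - apply Hz; right; reflexivity.
Qed.

End Bounds.

Section PosetCompl.
Variables (T : Type) (S : pc_struct T).
Hypothesis HS : is_poset_compl S.
Local Notation "x <= y" := (le S x y).

Lemma le_refl x : x <= x.
Proof. destruct HS as (H & _); apply H. Qed.

Lemma le_antisym x y : x <= y -> y <= x -> x = y.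
Proof. destruct HS as (_ & H & _); apply H. Qed.

Lemma le_trans x y z : x <= y -> y <= z -> x <= z.
Proof. destruct HS as (_ & _ & H & _); apply H. Qed.

Lemma bot_le x : bot S <= x.
Proof. destruct HS as (_ & _ & _ & H & _); apply H. Qed.

Lemma le_top x : x <= top S.
Proof. destruct HS as (_ & _ & _ & H & _); apply H. Qed.

Lemma cpl_le x y : x <= y -> cpl S y <= cpl S x.
Proof. destruct HS as (_ & _ & _ & _ & H & _); apply H. Qed.

Lemma cpl_cpl x : cpl S (cpl S x) = x.
Proof. destruct HS as (_ & _ & _ & _ & _ & H & _); apply H. Qed.

Lemma le_cpl_bot x z : z <= x -> z <= cpl S x -> z = bot S.
Proof.
  destruct HS as (_ & _ & _ & _ & _ & _ & H & _).
  intros Hx Hx'; apply (H x z), LB_pair; split; assumption.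
Qed.

Lemma cpl_le_top x z : x <= z -> cpl S x <= z -> z = top S.
Proof.
  destruct HS as (_ & _ & _ & _ & _ & _ & _ & H).
  intros Hx Hx'; apply (H x z), UB_pair; split; assumption.
Qed.

Lemma le_cpl_sym x y : x <= cpl S y -> y <= cpl S x.
Proof. intros H; rewrite <- (cpl_cpl y); apply cpl_le, H. Qed.

Lemma cpl_le_sym x y : cpl S x <= y -> cpl S y <= x.
Proof. intros H; rewrite <- (cpl_cpl x); apply cpl_le, H. Qed.

Definition orthomodular_disjoint : Prop :=
  forall b c, b <= c -> (forall w, w <= c -> w <= cpl S b -> w <= bot S) -> c <= b.

Lemma disjoint_iff_le b c : orthomodular_disjoint -> b <= c ->
  (forall w, w <= c -> w <= cpl S b -> w <= bot S) <-> c <= b.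
Proof.
  intros HD bc; split; [apply HD, bc |].
  intros cb w wc wb; rewrite (le_cpl_bot (le_trans wc cb) wb); apply le_refl.
Qed.

Lemma orthomodular_of_disjoint : orthomodular_disjoint -> orthomodular S.
Proof.
  intros HD x y j m k [Hj _] [Hm Hm_glb] [Hk Hk_lub].
  apply UB_pair in Hj as [_ yj]; apply LB_pair in Hm as [mj _];
    apply UB_pair in Hk as [mk yk].
  assert (kj : k <= j) by (apply Hk_lub, UB_pair; split; assumption).
  apply le_antisym; [| exact kj].
  apply HD; [exact kj |]. intros w wj wk.
  assert (wm : w <= m).
  { apply Hm_glb, LB_pair; split; [exact wj |].
    apply (le_trans wk), cpl_le, yk. }
  rewrite (le_cpl_bot (le_trans wm mk) wk); apply le_refl.
Qed.

Lemma disjoint_of_orthomodular : complete S -> orthomodular S -> orthomodular_disjoint.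
Proof.
  intros HC HO b c bc Hdisj.
  destruct (HC (pair c (cpl S b))) as [_ [m Hm]].
  destruct (HC (pair m b)) as [[k Hk] _].
  assert (Hc : is_sup S (pair c b) c).
  { split; [apply UB_pair; split; [apply le_refl | exact bc] |].
    intros u Hu; apply UB_pair in Hu; apply Hu. }
  rewrite (HO c b c m k Hc Hm Hk).
  apply Hk, UB_pair; split; [| apply le_refl].
  destruct Hm as [Hm _]; apply LB_pair in Hm as [mc mb].
  apply (le_trans (Hdisj m mc mb)), bot_le.
Qed.

Lemma pseudo_orthomodular_of_disjoint :
  complete S -> orthomodular_disjoint -> pseudo_orthomodular S.
Proof.
  intros HC HD; apply pseudo_orthomodular_intro; intros x y z Hz.
  destruct (HC (pair x y)) as [_ [a [Ha Ha_glb]]].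
  destruct (HC (pair a (cpl S y))) as [[s [Hs Hs_lub]] _].
  destruct (HC (pair s y)) as [_ [c [Hc Hc_glb]]].
  apply LB_pair in Ha as [ax ay]; apply UB_pair in Hs as [as_ ys];
    apply LB_pair in Hc as [cs cy].
  assert (zy : z <= y) by (apply Hz; right; reflexivity).
  assert (zs : z <= s).
  { apply Hz; left; intros m [Hm | ->]; [| exact ys].
    apply (le_trans (Ha_glb m Hm)), as_. }
  assert (ca : c <= a).
  { apply HD; [apply Hc_glb, LB_pair; split; assumption |].
    intros w wc wa.
    assert (ws : w <= cpl S s).
    { apply le_cpl_sym, Hs_lub, UB_pair; split.
      - apply le_cpl_sym, wa.
      - apply cpl_le, (le_trans wc cy). }
    rewrite (le_cpl_bot (le_trans wc cs) ws); apply le_refl. }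
  assert (zc : z <= c) by (apply Hc_glb, LB_pair; split; assumption).
  apply LB_pair; split; [| exact zy].
  apply (le_trans zc), (le_trans ca), ax.
Qed.

End PosetCompl.

Section DoublyDense.
Variables (L : Type) (SL : pc_struct L) (X : L -> Prop).
Hypothesis HX : doubly_dense SL X.
Local Notation "x <= y" := (le SL x y).

Lemma dense_le_below a b : (forall z, X z -> z <= a -> z <= b) -> a <= b.
Proof.
  intros H; apply (proj2 (proj1 (HX a))).
  intros z [za Xz]; apply H; assumption.
Qed.

Lemma dense_le_above a b : (forall z, X z -> b <= z -> a <= z) -> a <= b.
Proof.
  intros H; apply (proj2 (proj2 (HX b))).
  intros z [bz Xz]; apply H; assumption.
Qed.

End DoublyDense.

Section InducedStructure.
Variables (L : Type) (SL : pc_struct L) (X : L -> Prop)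
  (hc : compl_closed SL X) (h0 : X (bot SL)) (h1 : X (top SL)).
Hypothesis HL : is_poset_compl SL.
Local Notation XS := (sub_struct SL X hc h0 h1).
Local Notation "x <= y" := (le SL x y).

Lemma sub_poset_compl : is_poset_compl XS.
Proof.
  split; [| split; [| split; [| split; [| split; [| split; [| split]]]]]].
  - intros x; apply (le_refl HL).
  - intros x y xy yx; apply proj1_sig_inj, (le_antisym HL xy yx).
  - intros x y z; apply (le_trans HL).
  - intros x; split; [apply (bot_le HL) | apply (le_top HL)].
  - intros x y; apply (cpl_le HL).
  - intros x; apply proj1_sig_inj, (cpl_cpl HL).
  - intros x z; split; [| intros -> m _; apply (bot_le HL)].
    intros Hz; apply LB_pair in Hz as [zx zx'].
    apply proj1_sig_inj, (le_cpl_bot HL zx zx').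
  - intros x z; split; [| intros -> m _; apply (le_top HL)].
    intros Hz; apply UB_pair in Hz as [xz xz'].
    apply proj1_sig_inj, (cpl_le_top HL xz xz').
Qed.

Lemma sub_cpl_cpl p : cpl XS (cpl XS p) = p.
Proof. apply proj1_sig_inj, (cpl_cpl HL). Qed.

Hypothesis HX : doubly_dense SL X.

Lemma sub_pseudo_orthomodular : pseudo_orthomodular SL -> pseudo_orthomodular XS.
Proof.
  intros Hpom; apply pseudo_orthomodular_intro; intros x y z Hz.
  assert (HzL : LB SL (pair (proj1_sig x) (proj1_sig y)) (proj1_sig z)).
  { apply (proj1 (Hpom _ _ _)); intros m [Hm | ->]; [| apply (Hz y); right; reflexivity].
    apply (dense_le_above HX); intros v Xv mv.
    apply (Hz (exist X v Xv)); left; intros n [Hn | ->]; simpl.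
    - apply (le_trans HL (y := m)), mv.
      apply Hm; left; apply LB_pair; apply LB_pair in Hn; exact Hn.
    - apply (le_trans HL (y := m)), mv.
      apply Hm; right; reflexivity. }
  apply LB_pair; apply LB_pair in HzL; exact HzL.
Qed.

Definition sub_image (B : {x | X x} -> Prop) : L -> Prop :=
  fun v => exists p, B p /\ proj1_sig p = v.

Section SupInf.
Variables (B C : {x | X x} -> Prop) (b c : L).
Hypotheses (Hb : is_sup SL (sub_image B) b) (Hc : is_inf SL (sub_image C) c).

Lemma sub_lower_le_upper_iff :
  (forall l u, LB XS C l -> UB XS B u -> le XS l u) <-> c <= b.
Proof.
  split.
  - intros H; apply (dense_le_below HX); intros w Xw wc.
    apply (dense_le_above HX); intros v Xv bv.
    apply (H (exist X w Xw) (exist X v Xv)); intros p Hp; simpl.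
    + apply (le_trans HL wc), Hc; exists p; split; [exact Hp | reflexivity].
    + apply (le_trans HL (y := b)), bv; apply Hb; exists p; split; [exact Hp | reflexivity].
  - intros cb l u Hl Hu; simpl.
    apply (le_trans HL (y := c)); [| apply (le_trans HL cb)].
    + apply Hc; intros v [p [Hp <-]]; exact (Hl p Hp).
    + apply Hb; intros v [p [Hp <-]]; exact (Hu p Hp).
Qed.

Lemma sub_inf_bot_iff :
  is_inf XS (fun g => C g \/ B (cpl XS g)) (bot XS) <->
  (forall w, w <= c -> w <= cpl SL b -> w <= bot SL).
Proof.
  split.
  - intros [_ Hglb] w wc wb; apply (dense_le_below HX); intros z Xz zw.
    apply (Hglb (exist X z Xz)); intros g [Hg | Hg]; simpl.
    + apply (le_trans HL zw), (le_trans HL wc), Hc.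
      exists g; split; [exact Hg | reflexivity].
    + apply (le_trans HL zw), (le_trans HL wb), (cpl_le_sym HL), Hb.
      exists (cpl XS g); split; [exact Hg | reflexivity].
  - intros Hdisj; split; [intros g _; apply (bot_le HL) |].
    intros z Hz; apply Hdisj.
    + apply Hc; intros v [p [Hp <-]]; apply Hz; left; exact Hp.
    + apply (le_cpl_sym HL), Hb; intros v [p [Hp <-]].
      apply (le_cpl_sym HL), (Hz (cpl XS p)); right.
      rewrite sub_cpl_cpl; exact Hp.
Qed.

End SupInf.

Lemma sub_strongly_D_continuous :
  complete SL -> orthomodular_disjoint SL -> strongly_D_continuous XS.
Proof.
  intros HC HD B C BC.
  destruct (HC (sub_image B)) as [[b Hb] _]; destruct (HC (sub_image C)) as [_ [c Hc]].
  assert (bc : b <= c).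
  { apply Hb; intros v [p [Bp <-]]; apply Hc; intros v [q [Cq <-]]; exact (BC p q Bp Cq). }
  rewrite (sub_inf_bot_iff Hb Hc), (sub_lower_le_upper_iff Hb Hc).
  exact (disjoint_iff_le HL HD bc).
Qed.

End InducedStructure.

Section MacNeille.
Variables (T : Type) (S : pc_struct T).
Local Notation "x <= y" := (le S x y).

Definition normal (A : T -> Prop) : Prop := forall z, LB S (UB S A) z -> A z.

Definition nideal := {A : T -> Prop | normal A}.

Lemma principal_normal x : normal (fun z => z <= x).
Proof. intros z Hz; apply Hz; intros m Hm; exact Hm. Qed.

Definition principal x : nideal := exist normal (fun z => z <= x) (@principal_normal x).

Definition ortho (A : T -> Prop) : T -> Prop := fun z => forall a, A a -> z <= cpl S a.

Lemma ortho_normal A : normal (ortho A).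
Proof. intros z Hz a Ha; apply Hz; intros w Hw; apply Hw, Ha. Qed.

Definition nideal_struct : pc_struct nideal :=
  PC (fun A B : nideal => forall z, proj1_sig A z -> proj1_sig B z)
     (fun A => exist normal (ortho (proj1_sig A)) (@ortho_normal (proj1_sig A)))
     (principal (bot S)) (principal (top S)).

Local Notation "A ⊑ B" := (le nideal_struct A B) (at level 70).

Lemma nideal_ext (A B : nideal) : (forall z, proj1_sig A z <-> proj1_sig B z) -> A = B.
Proof.
  intros H; apply proj1_sig_inj, functional_extensionality; intros z.
  apply propositional_extensionality, H.
Qed.

Lemma nideal_complete : complete nideal_struct.
Proof.
  intros M; split.
  - set (U := fun w => exists A : nideal, M A /\ proj1_sig A w).
    assert (HU : normal (LB S (UB S U))).
    { intros z Hz u Hu; apply Hz; intros w Hw; apply Hw, Hu. }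
    exists (exist _ _ HU); split.
    + intros A HA z Hz u Hu; apply Hu; exists A; split; assumption.
    + intros [B HB] HBM z Hz; apply HB; intros u Hu; apply Hz.
      intros w [A [HA Hw]]; apply Hu, (HBM A HA w Hw).
  - set (I := fun z => forall A : nideal, M A -> proj1_sig A z).
    assert (HI : normal I).
    { intros z Hz [A HA] HMA; apply HA; intros u Hu; apply Hz.
      intros w Hw; apply Hu, (Hw _ HMA). }
    exists (exist _ _ HI); split.
    + intros A HA z Hz; exact (Hz A HA).
    + intros B HB z Hz A HA; exact (HB A HA z Hz).
Qed.

Hypothesis HS : is_poset_compl S.

Lemma normal_down_closed A x z : normal A -> A x -> z <= x -> A z.
Proof. intros HA Hx zx; apply HA; intros u Hu; apply (le_trans HS zx), Hu, Hx. Qed.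

Lemma principal_le_iff x y : x <= y <-> principal x ⊑ principal y.
Proof.
  split.
  - intros xy z zx; apply (le_trans HS zx xy).
  - intros H; apply H, (le_refl HS).
Qed.

Lemma principal_inj x y : principal x = principal y -> x = y.
Proof.
  intros E; apply (le_antisym HS); apply principal_le_iff; rewrite E; intros z Hz; exact Hz.
Qed.

Lemma cpl_principal x : cpl nideal_struct (principal x) = principal (cpl S x).
Proof.
  apply nideal_ext; intros z; split.
  - intros H; apply H, (le_refl HS).
  - intros zx a ax; apply (le_trans HS zx), (cpl_le HS ax).
Qed.

Lemma nideal_bot_le A : principal (bot S) ⊑ A.
Proof.
  destruct A as [A HA]; intros z Hz; apply HA.
  intros u _; apply (le_trans HS Hz), (bot_le HS).
Qed.

Lemma nideal_le_top A : A ⊑ principal (top S).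
Proof. intros z _; apply (le_top HS). Qed.

Lemma ortho_ortho A : cpl nideal_struct (cpl nideal_struct A) = A.
Proof.
  destruct A as [A HA]; apply nideal_ext; intros z; simpl; split.
  - intros Hz; apply HA; intros u Hu; rewrite <- (cpl_cpl HS u).
    apply Hz; intros a Ha; apply (cpl_le HS), Hu, Ha.
  - intros Hz w Hw; apply (le_cpl_sym HS), Hw, Hz.
Qed.

Lemma nideal_poset_compl : is_poset_compl nideal_struct.
Proof.
  split; [| split; [| split; [| split; [| split; [| split; [| split]]]]]].
  - intros A z Hz; exact Hz.
  - intros A B AB BA; apply nideal_ext; split; [apply AB | apply BA].
  - intros A B C AB BC z Hz; apply BC, AB, Hz.
  - intros A; split; [apply nideal_bot_le | apply nideal_le_top].
  - intros A B AB z Hz a Ha; apply Hz, AB, Ha.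
  - exact ortho_ortho.
  - intros A D; split; [| intros -> m _; apply nideal_bot_le].
    intros HD; apply LB_pair in HD as [DA DA'].
    apply nideal_ext; intros z; split; [| apply nideal_bot_le].
    intros Hz; rewrite (le_cpl_bot HS (le_refl HS z) (DA' z Hz z (DA z Hz))).
    apply (le_refl HS).
  - intros A D; split; [| intros -> m _; apply nideal_le_top].
    intros HD; apply UB_pair in HD as [AD A'D].
    apply nideal_ext; intros z; split; [apply nideal_le_top |].
    intros _; destruct D as [D HDn]; apply HDn; intros u Hu; simpl in *.
    assert (Hu' : ortho (proj1_sig A) (cpl S u)).
    { intros a Ha; apply (cpl_le HS), Hu, AD, Ha. }
    rewrite (cpl_le_top HS (le_refl HS u) (Hu _ (A'D _ Hu'))); apply (le_top HS).
Qed.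

Lemma nideal_orthomodular_disjoint :
  strongly_D_continuous S -> orthomodular_disjoint nideal_struct.
Proof.
  intros Hsd [K HK] [J HJ] KJ Hdisj z Jz; simpl in *.
  apply HK; intros u Hu.
  refine (proj1 (Hsd K (UB S J) _) _ z u _ Hu).
  - intros a c Ka Jc; apply Jc, KJ, Ka.
  - split; [intros g _; apply (bot_le HS) |]; intros w Hw.
    assert (Jw : J w) by (apply HJ; intros v Hv; apply Hw; left; exact Hv).
    assert (Kw : ortho K w).
    { intros a Ka; apply Hw; right; rewrite (cpl_cpl HS); exact Ka. }
    refine (Hdisj (principal w) _ _ w (le_refl HS w)); intros v vw.
    + exact (normal_down_closed HJ Jw vw).
    + exact (normal_down_closed (@ortho_normal K) Kw vw).
  - intros v Hv; apply Hv, Jz.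
Qed.

Definition is_principal (A : nideal) : Prop := exists x, A = principal x.

Lemma principal_is_principal x : is_principal (principal x).
Proof. exists x; reflexivity. Qed.

Lemma is_principal_compl_closed : compl_closed nideal_struct is_principal.
Proof. intros A [x ->]; exists (cpl S x); apply cpl_principal. Qed.

Lemma principal_doubly_dense : doubly_dense nideal_struct is_principal.
Proof.
  intros [A HA]; split; split.
  - intros Z [ZA _]; exact ZA.
  - intros B HB z Az; refine (HB (principal z) _ z (le_refl HS z)); split.
    + intros v vz; exact (normal_down_closed HA Az vz).
    + exists z; reflexivity.
  - intros Z [AZ _]; exact AZ.
  - intros B HB z Bz; simpl; apply HA; intros u Hu.
    refine (HB (principal u) _ z Bz); split.
    + intros v Av; exact (Hu v Av).
    + exists u; reflexivity.
Qed.

End MacNeille.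

Theorem theorem10 :
  (* (a) *)
  (forall (T : Type) (S : pc_struct T),
     is_poset_compl S -> strongly_D_continuous S -> pseudo_orthomodular S ->
     exists (L : Type) (SL : pc_struct L) (X : L -> Prop)
            (hc : compl_closed SL X) (h0 : X (bot SL)) (h1 : X (top SL)),
       complete_orthomodular_lattice SL /\ doubly_dense SL X /\
       exists f : T -> {x | X x},
         (forall y, exists x, f x = y) /\
         (forall x1 x2, f x1 = f x2 -> x1 = x2) /\
         (forall x y, le S x y <-> le (sub_struct SL X hc h0 h1) (f x) (f y)) /\
         (forall x, f (cpl S x) = cpl (sub_struct SL X hc h0 h1) (f x)))
  /\
  (* (b) *)
  (forall (L : Type) (SL : pc_struct L) (X : L -> Prop)
          (hc : compl_closed SL X) (h0 : X (bot SL)) (h1 : X (top SL)),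
     complete_orthomodular_lattice SL -> doubly_dense SL X ->
     is_poset_compl (sub_struct SL X hc h0 h1) /\
     strongly_D_continuous (sub_struct SL X hc h0 h1) /\
     pseudo_orthomodular (sub_struct SL X hc h0 h1)).
Proof.
  split.
  - intros T S HS Hsd _.
    exists (nideal S), (nideal_struct S), (@is_principal _ S), (is_principal_compl_closed HS),
      (principal_is_principal S (bot S)), (principal_is_principal S (top S)).
    split; [split; [| split] | split].
    + exact (nideal_poset_compl HS).
    + apply nideal_complete.
    + apply (orthomodular_of_disjoint (nideal_poset_compl HS)).
      exact (nideal_orthomodular_disjoint HS Hsd).
    + exact (principal_doubly_dense HS).
    + exists (fun x => exist _ (principal S x) (principal_is_principal S x)).
      split; [| split; [| split]].
      * intros [A [x ->]]; exists x; apply proj1_sig_inj; reflexivity.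
      * intros x1 x2 E; apply (principal_inj HS); exact (f_equal (@proj1_sig _ _) E).
      * intros x y; exact (principal_le_iff HS x y).
      * intros x; apply proj1_sig_inj; symmetry; exact (cpl_principal HS x).
  - intros L SL X hc h0 h1 [HL [HC HOM]] HX.
    assert (HD : orthomodular_disjoint SL) by exact (disjoint_of_orthomodular HL HC HOM).
    split; [| split].
    + apply sub_poset_compl, HL.
    + apply sub_strongly_D_continuous; assumption.
    + apply sub_pseudo_orthomodular; [exact HL | exact HX |].
      exact (pseudo_orthomodular_of_disjoint HL HC HD).
Qed.
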